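(* Let $G$ be a finite simple graph on $[d]$, let $k\ge1$, let $<$ be a monomial order on $R[G]$, and let $\{m_1,\dots,m_s\}$ be the set of all standard monomials of degree $k$ with respect to the initial ideal ${\rm in}_<(K_G)$. Each such $m_i$ is of the form $x_{S_1}\cdots x_{S_k}$ with $S_1,\dots,S_k$ pairwise disjoint stable sets, and hence equals ${\bf x}_{f_i}$ for the $k$-coloring $f_i$ of $G[S_1\cup\dots\cup S_k]$ given by $f_i(v)=\ell$ for $v\in S_\ell$. Then the set of those $f_i$ that are $k$-colorings of $G$ itself (i.e. with $S_1\cup\dots\cup S_k=[d]$) is a complete representative system for the set ${\rm kc}(G,k)$ of $k$-Kempe classes of $G$.
   Context: A $k$-coloring of a graph $H$ is a map $f:V(H)\to[k]$ (not necessarily surjective) with $f(u)\neq f(v)$ for every edge $\{u,v\}$. A Kempe switching of a $k$-coloring $f$: choose colors $i<j$ and a connected component $C$ of $H[f^{-1}(i)\cup f^{-1}(j)]$, and interchange $i$ and $j$ on $C$. Two $k$-colorings are Kempe equivalent ($\sim_k$) if one is obtained from the other by a finite sequence of Kempe switchings; ${\rm kc}(H,k)$ is the set of equivalence classes (the $k$-Kempe classes) of the set of $k$-colorings of $H$. Colorings differing only by a permutation of the colors are identified. A stable set of $G$ is a subset of $[d]$ containing no edge (including $\emptyset$ and singletons); $S(G)$ is the set of stable sets; $R[G]=\mathbb{K}[x_S:S\in S(G)]$ over a field $\mathbb{K}$, all variables of degree $1$. For a $k$-coloring $f$ of an induced subgraph $G[W]$, ${\bf x}_f=\prod_{\ell=1}^k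 x_{f^{-1}(\ell)}$. $J_G$ is the ideal generated by all ${\bf x}_f-{\bf x}_g$ with $f,g$ $2$-colorings of a common induced subgraph of $G$; $M_G=\langle x_Sx_T : S,T\in S(G),\ S\cap T\neq\emptyset\rangle$; the Kempe ideal is $K_G=J_G+M_G$. For a monomial order $<$, ${\rm in}_<(I)$ is the ideal generated by the leading monomials of nonzero elements of $I$, and a monomial is standard if it does not lie in ${\rm in}_<(I)$. *)

From HB Require Import structures.
From mathcomp Require Import all_boot all_order all_algebra.
From mathcomp Require Import mpoly.
From Stdlib Require Relations.Relation_Definitions Relations.Relation_Operators.

Set Implicit Arguments.
Unset Strict Implicit.
Unset Printing Implicit Defensive.

Import GRing.Theory.
Local Open Scope ring_scope.

Section Defs.
Variables (d : nat) (e : rel 'I_d).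

Definition stable (S : {set 'I_d}) : bool :=
  [forall u in S, forall v in S, ~~ e u v].

(* the finite type S(G) of stable sets, indexing the variables of R[G] *)
Definition stT := {S : {set 'I_d} | stable S}.

Definition nst : nat := #|{: stT}|.

(* W-proper_col coloring: f is a coloring of the induced subgraph G[W] *)
Definition proper_col (k : nat) (W : {set 'I_d}) (f : {ffun 'I_d -> 'I_k}) : Prop :=
  forall u v, u \in W -> v \in W -> e u v -> f u != f v.

Variable K : fieldType.

(* the variable x_S of R[G] = K[x_S : S in S(G)] (0 if S is not stable) *)
Definition xS (S : {set 'I_d}) : {mpoly K[nst]} :=
  match @insub _ (stable) stT S with
  | Some s => 'X_(enum_rank s)
  | None => 0
  end.

Definition xf (k : nat) (W : {set 'I_d}) (f : {ffun 'I_d -> 'I_k}) : {mpoly K[nst]} :=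
  \prod_(l < k) xS [set v in W | f v == l].

Definition Jgen (p : {mpoly K[nst]}) : Prop :=
  exists (W : {set 'I_d}) (f g : {ffun 'I_d -> 'I_2}),
    proper_col W f /\ proper_col W g /\ p = xf W f - xf W g.

Definition Mgen (p : {mpoly K[nst]}) : Prop :=
  exists S T : {set 'I_d},
    stable S /\ stable T /\ S :&: T != set0 /\ p = xS S * xS T.

End Defs.

Definition ideal_gen (n : nat) (K : fieldType) (A : {mpoly K[n]} -> Prop)
    (p : {mpoly K[n]}) : Prop :=
  exists s : seq ({mpoly K[n]} * {mpoly K[n]}),
    (forall x, x \in s -> A x.1) /\ p = \sum_(x <- s) x.1 * x.2.

Definition Kempe_ideal (d : nat) (e : rel 'I_d) (K : fieldType) : {mpoly K[nst e]} -> Prop :=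
  ideal_gen (fun p => @Jgen d e K p \/ @Mgen d e K p).

Definition monomial_order (n : nat) (lt : rel 'X_{1..n}) : Prop :=
  [/\ irreflexive lt,
      transitive lt,
      (forall m m', m != m' -> lt m m' || lt m' m),
      (forall m m' p, lt m m' -> lt (m + p)%MM (m' + p)%MM)
    & well_founded (fun a b => lt a b)].

Definition is_lead (n : nat) (K : fieldType) (lt : rel 'X_{1..n}) (p : {mpoly K[n]})
    (m : 'X_{1..n}) : Prop :=
  m \in msupp p /\ (forall m', m' \in msupp p -> m' != m -> lt m' m).

Definition initial_ideal (n : nat) (K : fieldType) (lt : rel 'X_{1..n})
    (I : {mpoly K[n]} -> Prop) : {mpoly K[n]} -> Prop :=
  @ideal_gen n K (fun q => exists (p : {mpoly K[n]}) (m : 'X_{1..n}),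
                 I p /\ p != 0 /\ @is_lead n K lt p m /\ q = 'X_[m]).

Definition std_monomial (n : nat) (K : fieldType) (lt : rel 'X_{1..n})
    (I : {mpoly K[n]} -> Prop) (k : nat) (m : 'X_{1..n}) : Prop :=
  mdeg m = k /\ ~ @initial_ideal n K lt I 'X_[m].

Definition kswitch (d : nat) (e : rel 'I_d) (k : nat) (f : {ffun 'I_d -> 'I_k})
    (i j : 'I_k) (v : 'I_d) : {ffun 'I_d -> 'I_k} :=
  [ffun u => if connect (fun a b => [&& e a b, (f a == i) || (f a == j)
                                      & (f b == i) || (f b == j)]) v u
             then (if f u == i then j else if f u == j then i else f u)
             else f u].

Definition kstep (d : nat) (e : rel 'I_d) (k : nat) (f g : {ffun 'I_d -> 'I_k}) : Prop :=
  exists (i j : 'I_k) (v : 'I_d), g = kswitch e f i j v.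

Definition kempe_equiv (d : nat) (e : rel 'I_d) (k : nat) : Relation_Definitions.relation {ffun 'I_d -> 'I_k} :=
  @Relation_Operators.clos_refl_trans _ (@kstep d e k).

Arguments Kempe_ideal {d} e K _.

(* A Kempe switch only exchanges two colour classes S_i, S_j of a
   colouring for the two colour classes of another 2-colouring of
   G[S_i ∪ S_j]; so x_f - x_g ∈ J_G·R[G] ⊆ K_G whenever f ~ g, and two distinct
   standard monomials x_f, x_g are never Kempe equivalent, since otherwise the
   larger of them would be the leading monomial of x_f - x_g ∈ K_G.
   Conversely, fix a Kempe class and let φ be the linear form summing the
   coefficients at the monomials x_f, f in the class.  φ vanishes on K_G: a
   generator of J_G times a monomial has either both or none of its two terms
   in the class, because recolouring a two-coloured part of a colouring is a
   sequence of Kempe switches; a generator x_S x_T of M_G (S ∩ T ≠ ∅) times a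
   monomial has no term in the class, as colour classes are disjoint.  If the
   <-least monomial x_f of the class were in in_<(K_G), it would be divisible
   by the leading monomial of some p ∈ K_G, and φ(p·x^μ) would be the nonzero
   leading coefficient of p, all other terms of p·x^μ being smaller than x_f.
   Finally a standard monomial of degree k is a product of k variables x_S,
   and these S are pairwise disjoint since x_S x_T ∈ M_G otherwise. *)

From mathcomp Require Import all_boot all_order all_algebra perm.
From mathcomp Require Import mpoly.
From Stdlib Require Import Relations.Relation_Operators.

Set Implicit Arguments.
Unset Strict Implicit.
Unset Printing Implicit Defensive.

Section KempeSwitch.
Variables (d k : nat) (e : rel 'I_d).
Hypothesis e_sym : forall u v, e u v = e v u.
Implicit Types (f g h : {ffun 'I_d -> 'I_k}) (i j : 'I_k) (u v : 'I_d).

Definition coloring f := forall u v, e u v -> f u != f v.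

Definition kchain f i j : rel 'I_d :=
  fun a b => [&& e a b, f a \in [set i; j] & f b \in [set i; j]].

Lemma kchain_sym f i j : ssrbool.symmetric (kchain f i j).
Proof. by move=> a b; rewrite /kchain e_sym; do 2 case: (_ \in _); rewrite ?andbF. Qed.

Lemma kswitchE f i j v u :
  kswitch e f i j v u = if connect (kchain f i j) v u then tperm i j (f u) else f u.
Proof.
rewrite ffunE (@eq_connect _ _ (kchain f i j)); last by move=> a b; rewrite /kchain !inE.
case: ifP => // _; case: tpermP => [->|->|/eqP/negbTE-> /eqP/negbTE->]; rewrite ?eqxx //.
by case: eqVneq.
Qed.

Lemma tperm_in2 i j x : (tperm i j x \in [set i; j]) = (x \in [set i; j]).
Proof. by case: tpermP => [->|->|//]; rewrite set21 set22. Qed.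

Lemma tperm_other i j x y :
  x \in [set i; j] -> y \in [set i; j] -> x != y -> tperm i j x = y.
Proof.
by move=> /set2P[]-> /set2P[]->; rewrite ?eqxx ?tpermL ?tpermR.
Qed.

Lemma kswitch_coloring f i j v : coloring f -> coloring (kswitch e f i j v).
Proof.
move=> col_f.
have boundary a b : e a b -> connect (kchain f i j) v a ->
    ~~ connect (kchain f i j) v b -> tperm i j (f a) != f b.
  move=> eab Ca nCb; have [ina|outa] := boolP (f a \in [set i; j]); last first.
    by rewrite (out_perm (tperm_on i j) outa) col_f.
  have outb : f b \notin [set i; j].
    by apply: contra nCb => inb; apply: connect_trans Ca (connect1 _); rewrite /kchain eab ina.
  by apply: contraNneq outb => <-; rewrite tperm_in2.
move=> a b eab; rewrite !kswitchE.
case: (boolP (connect _ v a)) => Ca; case: (boolP (connect _ v b)) => Cb.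
- by rewrite (inj_eq perm_inj) col_f.
- exact: boundary.
- by rewrite eq_sym boundary // e_sym.
- exact: col_f.
Qed.

Definition recolor2 i j f g :=
  forall u, g u != f u -> (f u \in [set i; j]) && (g u \in [set i; j]).

Lemma recolor2_in2 i j f g u :
  recolor2 i j f g -> (g u \in [set i; j]) = (f u \in [set i; j]).
Proof. by move/(_ u); case: eqVneq => [-> //|_ /(_ isT)/andP[-> ->]]. Qed.

Lemma recolor2_sym i j f g : recolor2 i j f g -> recolor2 i j g f.
Proof. by move=> r u; rewrite eq_sym andbC; apply: r. Qed.

Lemma recolor2_trans i j f g h :
  recolor2 i j f g -> recolor2 i j g h -> recolor2 i j f h.
Proof.
move=> rfg rgh u hf; rewrite -(recolor2_in2 u rfg) (recolor2_in2 u rgh) andbb.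
have [hg|/rgh/andP[-> //]] := eqVneq (h u) (g u).
by move: hf; rewrite hg => /rfg/andP[].
Qed.

Lemma kswitch_recolor2 f i j v : recolor2 i j f (kswitch e f i j v).
Proof.
move=> u; rewrite kswitchE; case: ifP => _; last by rewrite eqxx.
have [fin|fout] := boolP (f u \in [set i; j]); first by rewrite tperm_in2 fin.
by rewrite (out_perm (tperm_on i j) fout) eqxx.
Qed.

Section TowardTarget.
Variables (f g : {ffun 'I_d -> 'I_k}) (i j : 'I_k).
Hypotheses (col_f : coloring f) (col_g : coloring g) (r : recolor2 i j f g).

(* Along an edge x y of the chain, f and g both 2-colour {x, y} with i and j,
   so f y = g x; hence f and g disagree on the whole chain of a vertex where
   they disagree. *)
Lemma kchain_differs v u : f v != g v -> connect (kchain f i j) v u ->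
  (f u \in [set i; j]) && (f u != g u).
Proof.
move=> fgv; pose a := [pred w | (f w \in [set i; j]) && (f w != g w)].
have cl_a : closed (kchain f i j) a.
  apply: intro_closed; first exact/sym_connect_sym/kchain_sym.
  move=> x y /and3P[exy inx iny] /andP[_ fgx]; apply/andP; split => //.
  have ingx : g x \in [set i; j] by rewrite (recolor2_in2 x r).
  rewrite -(tperm_other inx iny (col_f exy)) (tperm_other inx ingx fgx).
  exact: col_g.
have av : (f v \in [set i; j]) && (f v != g v).
  have /andP[-> _] : (f v \in [set i; j]) && (g v \in [set i; j]).
    by apply: r; rewrite eq_sym.
  by rewrite fgv.
by move=> C; rewrite -[_ && _]/(u \in a) -(closed_connect cl_a C).
Qed.

Lemma kswitch_toward v : f v != g v ->
  kswitch e f i j v =1 fun u => if connect (kchain f i j) v u then g u else f u.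
Proof.
move=> fgv u; rewrite kswitchE; case: ifP => // C.
have /andP[inu fgu] := kchain_differs fgv C.
by rewrite (tperm_other inu _ fgu) // (recolor2_in2 u r).
Qed.

End TowardTarget.

Lemma recolor2_kempe i j f g :
  coloring f -> coloring g -> recolor2 i j f g -> kempe_equiv e f g.
Proof.
move=> + col_g; have [N] := ubnP #|[pred u | f u != g u]|.
elim: N f => // N IH f; rewrite ltnS => leN col_f r.
case: (pickP [pred u | f u != g u]) => [v /= fgv | same]; last first.
  have -> : f = g by apply/ffunP => u; apply/eqP/negbFE/same.
  exact: rt_refl.
have hE := kswitch_toward col_f col_g r fgv.
apply: (rt_trans _ _ _ (kswitch e f i j v)); first by apply: rt_step; exists i, j, v.
apply: IH; last 2 first.
- exact: kswitch_coloring.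
- by apply: recolor2_trans r; apply/recolor2_sym/kswitch_recolor2.
apply: (leq_trans _ leN); apply: proper_card; apply/properP; split.
  by apply/subsetP => u; rewrite !inE hE; case: ifP; rewrite ?eqxx.
by exists v; rewrite !inE ?fgv // hE connect0 eqxx.
Qed.

(* A boolean Kempe step, so that Kempe classes can be enumerated. *)
Definition kstepb f g := [exists i, exists j, exists v, g == kswitch e f i j v].

Lemma kempe_equivP f g : kempe_equiv e f g <-> connect kstepb f g.
Proof.
split.
- elim=> [{}f {}g [i [j [v ->]]] | {}f | f1 f2 f3 _ IH1 _ IH2].
  + by apply/connect1/existsP; exists i; apply/existsP; exists j; apply/existsP; exists v.
  + exact: connect0.
  + exact: connect_trans IH1 IH2.
- case/connectP => p + ->; elim: p f => [|h p IH] f /=; first by move=> _; apply: rt_refl.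
  case/andP => /existsP[i /existsP[j /existsP[v /eqP hE]]] /IH.
  by apply: rt_trans; apply: rt_step; exists i, j, v.
Qed.

Lemma kempe_equiv_coloring f g : kempe_equiv e f g -> coloring f -> coloring g.
Proof.
elim=> [{}f {}g [i [j [v ->]]] | // | f1 f2 f3 _ IH1 _ IH2 /IH1/IH2 //].
exact: kswitch_coloring.
Qed.

End KempeSwitch.

Import GRing.Theory.
Local Open Scope ring_scope.

Section IdealGen.
Variables (n : nat) (K : fieldType) (A : {mpoly K[n]} -> Prop).
Local Notation I := (ideal_gen A).

Lemma ideal_gen0 : I 0.
Proof. by exists [::]; rewrite big_nil. Qed.

Lemma ideal_genD p q : I p -> I q -> I (p + q).
Proof.
move=> [s [As ->]] [t [At ->]]; exists (s ++ t); split; last by rewrite big_cat.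
by move=> x; rewrite mem_cat => /orP[/As|/At].
Qed.

Lemma ideal_genMl q p : I p -> I (q * p).
Proof.
move=> [s [As ->]]; exists [seq (x.1, q * x.2) | x <- s]; split.
  by move=> x /mapP[y ys ->] /=; apply: As.
by rewrite big_map mulr_sumr; apply: eq_bigr => x _; rewrite mulrCA.
Qed.

Lemma ideal_genN p : I p -> I (- p).
Proof. by rewrite -mulN1r; apply: ideal_genMl. Qed.

Lemma mem_ideal_gen p : A p -> I p.
Proof.
by move=> Ap; exists [:: (p, 1)]; rewrite big_seq1 mulr1; split=> // x /[1!inE] /eqP->.
Qed.

End IdealGen.

Section Monomials.
Variables (n : nat) (K : fieldType).
Implicit Types (m : 'X_{1..n}) (p : {mpoly K[n]}).

Lemma mnm_sum_mnm1 m k :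
  mdeg m = k -> exists t : 'I_k -> 'I_n, m = (\sum_(l < k) U_(t l))%MM.
Proof.
elim: k m => [|k IH] m dm.
  by exists (ffun0 (card_ord 0)); rewrite big_ord0; apply/eqP; rewrite -mdeg_eq0 dm.
have [i mi] : exists i, m i != 0%N.
  apply/existsP; apply: contraT => /existsPn m0.
  suff m_eq0 : m = 0%MM by rewrite m_eq0 mdeg0 in dm.
  by apply/mnmP => i; rewrite mnm0E; apply/eqP/negbNE/m0.
have mE : m = (U_(i) + (m - U_(i)))%MM by rewrite addmC submK // lep1mP.
have /IH[t tE] : mdeg (m - U_(i)) = k by move: dm; rewrite {1}mE mdegD mdeg1 => -[].
exists (fun l => if unlift ord0 l is Some l' then t l' else i).
rewrite big_ord_recl unlift_none {1}mE tE; congr (_ + _)%MM.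
by apply: eq_bigr => l _; rewrite liftK.
Qed.

Lemma mpolyX_neq0 m : 'X_[m] != 0 :> {mpoly K[n]}.
Proof. by apply/eqP => /(congr1 (mcoeff m))/eqP; rewrite mcoeffX mcoeff0 eqxx oner_eq0. Qed.

Lemma mpolyX_inj : injective (fun m => 'X_[m] : {mpoly K[n]}).
Proof. by move=> a b /(congr1 (@msupp n K)); rewrite !msuppX => -[]. Qed.

Definition mcoeffs_sum (s : seq 'X_{1..n}) p := \sum_(m <- s) p@_m.

Lemma mcoeffs_sumX s m : uniq s -> mcoeffs_sum s 'X_[m] = (m \in s)%:R.
Proof.
move=> us; rewrite /mcoeffs_sum; under eq_bigr do rewrite mcoeffX.
have [ms|mNs] := boolP (m \in s).
  rewrite (bigD1_seq m) //= eqxx big1 ?addr0 // => m' /negbTE.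
  by rewrite eq_sym => ->.
by rewrite big1_seq // => m' /andP[_ m's]; case: eqP => // mm'; rewrite mm' m's in mNs.
Qed.

Lemma mcoeffs_sumB s p q : mcoeffs_sum s (p - q) = mcoeffs_sum s p - mcoeffs_sum s q.
Proof. by rewrite /mcoeffs_sum -sumrB; apply: eq_bigr => m _; rewrite mcoeffB. Qed.

Lemma mcoeffs_sumZ s c p : mcoeffs_sum s (c *: p) = c * mcoeffs_sum s p.
Proof. by rewrite /mcoeffs_sum mulr_sumr; apply: eq_bigr => m _; rewrite mcoeffZ. Qed.

Lemma mcoeffs_sum_sum s (T : Type) (r : seq T) (F : T -> {mpoly K[n]}) :
  mcoeffs_sum s (\sum_(x <- r) F x) = \sum_(x <- r) mcoeffs_sum s (F x).
Proof. by rewrite /mcoeffs_sum exchange_big; apply: eq_bigr => m _; rewrite raddf_sum. Qed.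

Lemma mcoeffs_sum_ideal_gen (A : {mpoly K[n]} -> Prop) s :
    (forall p mu, A p -> mcoeffs_sum s (p * 'X_[mu]) = 0) ->
  forall p, ideal_gen A p -> mcoeffs_sum s p = 0.
Proof.
move=> vanish _ [t [At ->]]; rewrite mcoeffs_sum_sum big1_seq // => x /andP[_ xt].
rewrite [x.2]mpolyE mulr_sumr mcoeffs_sum_sum big1 // => mu _.
by rewrite -scalerAr mcoeffs_sumZ vanish ?mulr0 //; apply: At.
Qed.

Lemma sum_mnm1_extract2 k (t : 'I_k -> 'I_n) a b mu :
    (U_(a) + U_(b) + mu = \sum_(l < k) U_(t l))%MM ->
  exists l1 l2, [/\ l1 != l2, t l1 = a, t l2 = b &
    mu = (\sum_(l < k | (l != l1) && (l != l2)) U_(t l))%MM].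
Proof.
have occurs (P : pred 'I_k) c : (0 < (\sum_(l < k | P l) U_(t l))%MM c)%N ->
    exists2 l, P l & t l = c.
  rewrite mnm_sumE; case: (pickP (fun l => P l && (t l == c))) => [l /andP[Pl /eqP] | none].
    by exists l.
  by rewrite big1 // => l Pl; rewrite mnm1E; have := none l; rewrite Pl /= => ->.
move=> E.
have [l1 _ t1] : exists2 l1, true & t l1 = a.
  by apply: (occurs predT); rewrite -E !mnmDE mnm1E eqxx.
rewrite (bigD1 l1) //= t1 -addmA in E; move/addmI: E => E.
have [l2 l21 t2] : exists2 l2, l2 != l1 & t l2 = b.
  by apply: (occurs (fun l => l != l1)); rewrite -E !mnmDE mnm1E eqxx.
rewrite (bigD1 l2) //= t2 in E; move/addmI: E => E.
by exists l1, l2; split; rewrite // eq_sym.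
Qed.

End Monomials.

Section InitialIdeal.
Variables (n : nat) (K : fieldType) (lt : rel 'X_{1..n}).
Hypothesis lt_order : monomial_order lt.
Implicit Types (m : 'X_{1..n}) (A : {mpoly K[n]} -> Prop).

Lemma wf_seq_min (s : seq 'X_{1..n}) m :
  m \in s -> exists2 m0, m0 \in s & forall m', m' \in s -> ~~ lt m' m0.
Proof.
case: lt_order => _ _ _ _ wf; elim/(well_founded_induction wf): m => m IH ms.
have [/hasP[m' m's lt_m'm] | /hasPn min] := boolP (has (lt^~ m) s).
  exact: IH lt_m'm m's.
by exists m.
Qed.

Lemma initial_ideal_lead A p m :
  A p -> p != 0 -> is_lead lt p m -> initial_ideal lt A 'X_[m].
Proof. by move=> Ap p0 lead; apply: mem_ideal_gen; exists p, m. Qed.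

Lemma initial_idealX A m : A 'X_[m] -> initial_ideal lt A 'X_[m].
Proof.
move=> Am; apply: initial_ideal_lead Am (mpolyX_neq0 _ _) _.
by split=> [|m']; rewrite msuppX mem_seq1 ?eqxx // => /eqP->; rewrite eqxx.
Qed.

Lemma is_lead_binomial a b : a != b -> lt b a ->
  is_lead lt ('X_[a] - 'X_[b] : {mpoly K[n]}) a.
Proof.
move=> ab ba; split=> [|m]; rewrite mcoeff_msupp mcoeffB !mcoeffX.
  by rewrite eqxx (eq_sym b) (negbTE ab) subr0 oner_neq0.
case: (a =P m) => [->|_]; first by rewrite eqxx.
by case: (b =P m) => [<- _ _ //|_]; rewrite subrr eqxx.
Qed.

Lemma ideal_gen_binomial_initial A a b : a != b ->
    ideal_gen A ('X_[a] - 'X_[b]) ->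
  initial_ideal lt (ideal_gen A) 'X_[a] \/ initial_ideal lt (ideal_gen A) 'X_[b].
Proof.
have init a' b' : a' != b' -> lt b' a' -> ideal_gen A ('X_[a'] - 'X_[b']) ->
    initial_ideal lt (ideal_gen A) 'X_[a'].
  move=> ab ba Ip; have lead := is_lead_binomial ab ba.
  have p0 : ('X_[a'] - 'X_[b'] : {mpoly K[n]}) != 0.
    by case: lead => ain _; apply: contraTneq ain => ->; rewrite msupp0.
  exact: initial_ideal_lead Ip p0 lead.
move=> ab Ip; case: lt_order => _ _ total _ _.
have /orP[ba|ab'] := total _ _ ab.
  right; apply: (init b a) => //; first by rewrite eq_sym.
  by rewrite -opprB; apply: ideal_genN.
by left; apply: (init a b).
Qed.

Lemma not_initial_min A (s : seq 'X_{1..n}) m0 : uniq s ->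
    (forall p, ideal_gen A p -> mcoeffs_sum s p = 0) ->
    m0 \in s -> (forall m, m \in s -> ~~ lt m m0) ->
  ~ initial_ideal lt (ideal_gen A) 'X_[m0].
Proof.
case: lt_order => _ _ _ ltD _ us vanish m0s min [t [At tE]].
have [x xt] : exists2 x, x \in t & (x.1 * x.2)@_m0 != 0.
  have : (\sum_(x <- t) x.1 * x.2)@_m0 != 0 by rewrite -tE mcoeffX eqxx oner_neq0.
  rewrite raddf_sum => nz; apply/hasP; move: nz; apply: contraTT => /hasPn t0.
  by rewrite negbK big1_seq // => x /andP[_ /t0/negbNE/eqP].
have [p [l [Ip [_ [[lp l_max] ->]]]]] := At x xt.
rewrite mulrC -mcoeff_msupp (perm_mem (msuppMX _ _)) => /mapP[mu _ m0E].
have : mcoeffs_sum s (p * 'X_[mu]) = 0.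
  by apply: vanish; rewrite mulrC; apply: ideal_genMl.
rewrite /mcoeffs_sum (bigD1_seq m0) //= {1}m0E [(l + mu)%MM]addmC mcoeffMX.
rewrite big1_seq ?addr0; first by move/eqP; rewrite mcoeff_eq0 lp.
move=> m /andP[ne ms]; apply/eqP; rewrite mcoeff_eq0 (perm_mem (msuppMX _ _)).
apply/mapP => -[m' m'p mE]; have [m'l|m'l] := eqVneq m' l.
  by rewrite mE m'l addmC -m0E eqxx in ne.
by move/negP: (min m ms); apply; rewrite mE m0E addmC ltD // l_max.
Qed.

End InitialIdeal.

Section ColoringMonomial.
Variables (K : fieldType) (d : nat) (e : rel 'I_d).
Local Notation n := (nst e).

Lemma stable0 : stable e set0.
Proof. by apply/forall_inP => u; rewrite inE. Qed.

(* The index of the variable x_S; the default [set0] only matters for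
   non-stable S, for which x_S is 0. *)
Definition var_index (S : {set 'I_d}) : 'I_n :=
  enum_rank (insubd (exist _ set0 stable0 : stT e) S).

Lemma xS_var_index S : stable e S -> xS e K S = 'X_(var_index S).
Proof.
by move=> sS; rewrite /xS /var_index; case: insubP => [s _ <-|/negP //]; rewrite valKd.
Qed.

Lemma var_index_inj S T :
  stable e S -> stable e T -> var_index S = var_index T -> S = T.
Proof. by move=> sS sT /enum_rank_inj/(congr1 val); rewrite !val_insubd sS sT. Qed.

Lemma var_index_val (s : stT e) : var_index (val s) = enum_rank s.
Proof. by rewrite /var_index valKd. Qed.

Definition color_class k (W : {set 'I_d}) (f : {ffun 'I_d -> 'I_k}) (l : 'I_k) :=
  [set v in W | f v == l].

Lemma stable_color_class k W (f : {ffun 'I_d -> 'I_k}) l :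
  proper_col e W f -> stable e (color_class W f l).
Proof.
move=> pf; apply/forall_inP => u /setIdP[uW /eqP fu].
by apply/forall_inP => v /setIdP[vW /eqP fv]; apply/negP => /(pf _ _ uW vW); rewrite fu fv eqxx.
Qed.

Definition colmon k W (f : {ffun 'I_d -> 'I_k}) : 'X_{1..n} :=
  (\sum_(l < k) U_(var_index (color_class W f l)))%MM.

Lemma xf_colmon k W (f : {ffun 'I_d -> 'I_k}) :
  proper_col e W f -> xf e K W f = 'X_[colmon W f].
Proof.
move=> pf; rewrite /xf /colmon -mprodXE; apply: eq_bigr => l _.
by rewrite xS_var_index // stable_color_class.
Qed.

Lemma mdeg_colmon k W (f : {ffun 'I_d -> 'I_k}) : mdeg (colmon W f) = k.
Proof.
rewrite /colmon mdeg_sum; under eq_bigr do rewrite mdeg1.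
by rewrite sum_nat_const card_ord muln1.
Qed.

Lemma colmon2 W (h : {ffun 'I_d -> 'I_2}) : colmon W h =
  (U_(var_index (color_class W h ord0)) + U_(var_index (color_class W h ord_max)))%MM.
Proof. by rewrite /colmon big_ord_recl big_ord1. Qed.

Lemma color_class2_cover W (h : {ffun 'I_d -> 'I_2}) :
  color_class W h ord0 :|: color_class W h ord_max = W.
Proof.
apply/setP => u; rewrite !inE -andb_orr; case: (u \in W) => //=.
by case: (h u) => -[|[|]].
Qed.

Lemma proper_colT k (f : {ffun 'I_d -> 'I_k}) : proper_col e setT f <-> coloring e f.
Proof. by split=> [pf u v|cf u v _ _]; [apply: pf; rewrite inE|apply: cf]. Qed.

Definition colmon_off2 k (f : {ffun 'I_d -> 'I_k}) (i j : 'I_k) : 'X_{1..n} :=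
  (\sum_(l < k | (l != i) && (l != j)) U_(var_index (color_class setT f l)))%MM.

Lemma colmon_split k (f : {ffun 'I_d -> 'I_k}) i j : i != j -> colmon setT f =
  (U_(var_index (color_class setT f i)) + U_(var_index (color_class setT f j))
   + colmon_off2 f i j)%MM.
Proof. by move=> ij; rewrite /colmon (bigD1 i) //= (bigD1 j) 1?eq_sym //= addmA. Qed.

Lemma colmon_off2_recolor2 k (f g : {ffun 'I_d -> 'I_k}) i j :
  recolor2 i j f g -> colmon_off2 g i j = colmon_off2 f i j.
Proof.
move=> r; apply: eq_bigr => l /andP[li lj]; congr (U_(var_index _))%MM.
apply/setP => u; rewrite !inE; have [gf|/r/andP[fin gin]] := eqVneq (g u) (f u).
  by rewrite gf.
have notl x : x \in [set i; j] -> (x == l) = false.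
  by move=> xin; apply: contraTF xin => /eqP->; rewrite !inE negb_or li lj.
by rewrite !notl.
Qed.

End ColoringMonomial.

Section KempeBinomials.
Variables (K : fieldType) (d k : nat) (e : rel 'I_d).
Hypothesis e_sym : forall u v, e u v = e v u.
Local Notation n := (nst e).
Local Notation KG := (Kempe_ideal e K).
Implicit Types (f g : {ffun 'I_d -> 'I_k}) (i j : 'I_k).

Definition two_coloring f i : {ffun 'I_d -> 'I_2} :=
  [ffun u => if f u == i then ord0 else ord_max].

Lemma two_coloring_proper f i j : coloring e f -> i != j ->
  proper_col e [set u | f u \in [set i; j]] (two_coloring f i).
Proof.
move=> cf ij u v; rewrite !inE !ffunE => uin vin /cf.
have ji : (j == i) = false by rewrite eq_sym (negbTE ij).
by move: uin vin => /orP[]/eqP-> /orP[]/eqP->; rewrite ?eqxx ?ji.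
Qed.

Lemma colmon_two_coloring f i j : i != j ->
  colmon e [set u | f u \in [set i; j]] (two_coloring f i) =
  (U_(var_index e (color_class setT f i)) + U_(var_index e (color_class setT f j)))%MM.
Proof.
move=> ij; rewrite colmon2; congr (U_(var_index e _) + U_(var_index e _))%MM.
  by apply/setP => u; rewrite !inE ffunE; case: eqP => //= _; rewrite andbF.
apply/setP => u; rewrite !inE ffunE; case: (eqVneq (f u) i) => [->|] /=.
  by rewrite (negbTE ij).
by rewrite eqxx andbT.
Qed.

Lemma recolor2_Kempe_ideal f g i j :
    coloring e f -> coloring e g -> recolor2 i j f g ->
  KG ('X_[colmon e setT f] - 'X_[colmon e setT g]).
Proof.
move=> cf cg r; have [ij|ij] := eqVneq i j.
  have -> : g = f.
    apply/ffunP => u; apply/eqP; apply: contraT => gfu.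
    have := r u gfu; rewrite -ij !inE !orbb => /andP[/eqP fi /eqP gi].
    by rewrite fi gi eqxx in gfu.
  by rewrite subrr; apply: ideal_gen0.
have WE : [set u | g u \in [set i; j]] = [set u | f u \in [set i; j]].
  by apply/setP => u; rewrite !inE -!in_set2 (recolor2_in2 u r).
rewrite (colmon_split e f ij) (colmon_split e g ij) (colmon_off2_recolor2 e r).
rewrite ![(_ + colmon_off2 e f i j)%MM]addmC !mpolyXD -mulrBr.
apply/ideal_genMl/mem_ideal_gen; left.
exists [set u | f u \in [set i; j]], (two_coloring f i), (two_coloring g i).
have pf := two_coloring_proper cf ij.
have pg : proper_col e [set u | f u \in [set i; j]] (two_coloring g i).
  by rewrite -WE; apply: two_coloring_proper.
split=> //; split=> //.
by rewrite !xf_colmon // colmon_two_coloring // -WE colmon_two_coloring // !mpolyXD.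
Qed.

Lemma kempe_equiv_Kempe_ideal f g : kempe_equiv e f g -> coloring e f ->
  KG ('X_[colmon e setT f] - 'X_[colmon e setT g]).
Proof.
elim=> [{}f {}g [i [j [v ->]]] cf | {}f _ | f1 f2 f3 f12 IH1 _ IH2 cf1].
- apply: recolor2_Kempe_ideal => //; last exact: kswitch_recolor2.
  exact: kswitch_coloring.
- by rewrite subrr; apply: ideal_gen0.
- rewrite -(subrKA 'X_[colmon e setT f2]); apply: ideal_genD; first exact: IH1.
  exact/IH2/(kempe_equiv_coloring e_sym f12).
Qed.

End KempeBinomials.

Lemma two_colors_inj k (l1 l2 : 'I_k) :
  l1 != l2 -> injective (fun b : 'I_2 => if b == ord0 then l1 else l2).
Proof.
move=> l12 [[|[|//]] ?] [[|[|//]] ?] /= E; apply: val_inj => //=.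
all: by rewrite E eqxx in l12.
Qed.

Section KempeClass.
Variables (K : fieldType) (d k : nat) (e : rel 'I_d).
Hypothesis e_sym : forall u v, e u v = e v u.
Local Notation n := (nst e).
Implicit Types (f : {ffun 'I_d -> 'I_k}) (W : {set 'I_d}) (h : {ffun 'I_d -> 'I_2}).

Lemma splice_two_coloring f l1 l2 W h : coloring e f -> l1 != l2 ->
    W = color_class setT f l1 :|: color_class setT f l2 -> proper_col e W h ->
  exists f', [/\ coloring e f', recolor2 l1 l2 f f'
    & colmon e setT f' = (colmon e W h + colmon_off2 e f l1 l2)%MM].
Proof.
move=> cf l12 WE ph; set c := fun b : 'I_2 => if b == ord0 then l1 else l2.
have c_inj : injective c := two_colors_inj l12.
have c_in b : c b \in [set l1; l2] by rewrite /c; case: ifP; rewrite ?set21 ?set22.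
have inW u : (u \in W) = (f u \in [set l1; l2]) by rewrite WE !inE.
pose f' := [ffun u => if u \in W then c (h u) else f u].
have f'E u : f' u = if u \in W then c (h u) else f u by rewrite ffunE.
have r : recolor2 l1 l2 f f'.
  move=> u; rewrite f'E; have [uW|_] := boolP (u \in W); last by rewrite eqxx.
  by rewrite -inW uW c_in.
have cf' : coloring e f'.
  have mixed u v : u \in W -> v \notin W -> f' u != f' v.
    move=> uW vW; rewrite !f'E uW (negbTE vW).
    by apply: contraNneq vW; rewrite inW => <-.
  move=> u v euv; case: (boolP (u \in W)) => uW; case: (boolP (v \in W)) => vW.
  - by rewrite !f'E uW vW (inj_eq c_inj) ph.
  - exact: mixed.
  - by rewrite eq_sym mixed // e_sym.
  - by rewrite !f'E (negbTE uW) (negbTE vW) cf.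
have cls b : color_class setT f' (c b) = color_class W h b.
  apply/setP => u; rewrite !inE f'E; case: ifP => [_|uW]; first exact: inj_eq.
  by apply: contraFF uW => /eqP fu; rewrite inW fu.
exists f'; split => //.
rewrite (colmon_split e f' l12) (colmon_off2_recolor2 e r) colmon2.
by rewrite -[l1]/(c ord0) -[l2]/(c ord_max) !cls.
Qed.

Variable g : {ffun 'I_d -> 'I_k}.
Hypothesis col_g : coloring e g.

Definition kempe_mons : seq 'X_{1..n} :=
  undup [seq colmon e setT f | f <- enum {ffun 'I_d -> 'I_k} & connect (kstepb e) g f].

Lemma kempe_monsP m :
  m \in kempe_mons <-> exists2 f, kempe_equiv e g f & m = colmon e setT f.
Proof.
rewrite mem_undup; split.
  by case/mapP => f; rewrite mem_filter => /andP[/kempe_equivP gf _] ->; exists f.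
by case=> f /kempe_equivP gf ->; apply: map_f; rewrite mem_filter gf mem_enum.
Qed.

Lemma kempe_mons_recolor W h h' mu : proper_col e W h -> proper_col e W h' ->
  (colmon e W h + mu)%MM \in kempe_mons -> (colmon e W h' + mu)%MM \in kempe_mons.
Proof.
move=> ph ph' /kempe_monsP[f gf E].
have cf := kempe_equiv_coloring e_sym gf col_g.
have sf l := stable_color_class l ((proper_colT e f).2 cf).
rewrite colmon2 /colmon in E; have [l1 [l2 [l12 t1 t2 ->]]] := sum_mnm1_extract2 E.
have c1 := var_index_inj (sf l1) (stable_color_class ord0 ph) t1.
have c2 := var_index_inj (sf l2) (stable_color_class ord_max ph) t2.
have WE : W = color_class setT f l1 :|: color_class setT f l2.
  by rewrite c1 c2 color_class2_cover.
have [f' [cf' r f'E]] := splice_two_coloring cf l12 WE ph'.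
apply/kempe_monsP; exists f'; last by rewrite f'E.
exact: rt_trans gf (recolor2_kempe e_sym cf cf' r).
Qed.

Lemma mcoeffs_kempe_mons_Jgen (p : {mpoly K[n]}) mu :
  Jgen p -> mcoeffs_sum kempe_mons (p * 'X_[mu]) = 0.
Proof.
case=> W [h [h' [ph [ph' ->]]]].
rewrite !xf_colmon // mulrBl -!mpolyXD mcoeffs_sumB !mcoeffs_sumX ?undup_uniq //.
have -> : (colmon e W h' + mu \in kempe_mons)%MM =
          (colmon e W h + mu \in kempe_mons)%MM.
  by apply/idP/idP; apply: kempe_mons_recolor.
by rewrite subrr.
Qed.

Lemma mcoeffs_kempe_mons_Mgen (p : {mpoly K[n]}) mu :
  Mgen p -> mcoeffs_sum kempe_mons (p * 'X_[mu]) = 0.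
Proof.
case=> S [T [sS [sT [ST ->]]]].
rewrite !xS_var_index // -!mpolyXD mcoeffs_sumX ?undup_uniq //.
case: (boolP (_ \in _)) => // /kempe_monsP[f gf].
have cf := kempe_equiv_coloring e_sym gf col_g.
have sf l := stable_color_class l ((proper_colT e f).2 cf).
rewrite /colmon => /sum_mnm1_extract2[l1 [l2 [l12 t1 t2 _]]].
move/set0Pn: ST => [u].
rewrite -(var_index_inj (sf l1) sS t1) -(var_index_inj (sf l2) sT t2).
by rewrite !inE => /andP[/eqP-> /eqP fu]; rewrite fu eqxx in l12.
Qed.

Lemma mcoeffs_kempe_mons_Kempe_ideal p :
  Kempe_ideal e K p -> mcoeffs_sum kempe_mons p = 0.
Proof.
apply: mcoeffs_sum_ideal_gen => q mu.
by case=> [/mcoeffs_kempe_mons_Jgen|/mcoeffs_kempe_mons_Mgen].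
Qed.

Lemma kempe_class_std (lt : rel 'X_{1..n}) : monomial_order lt ->
  exists2 f, kempe_equiv e g f & std_monomial lt (Kempe_ideal e K) k (colmon e setT f).
Proof.
move=> lt_order; have gs : colmon e setT g \in kempe_mons.
  by apply/kempe_monsP; exists g => //; apply: rt_refl.
have [_ /kempe_monsP[f gf ->] min] := wf_seq_min lt_order gs.
exists f => //; split; first exact: mdeg_colmon.
apply: (not_initial_min lt_order (undup_uniq _) mcoeffs_kempe_mons_Kempe_ideal) => //.
by apply/kempe_monsP; exists f.
Qed.

End KempeClass.

Section StandardMonomials.
Variables (K : fieldType) (d k : nat) (e : rel 'I_d).
Hypothesis e_sym : forall u v, e u v = e v u.
Variable lt : rel 'X_{1..nst e}.
Hypothesis lt_order : monomial_order lt.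
Local Notation std := (std_monomial lt (Kempe_ideal e K) k).

Lemma std_monomial_disjoint_stable m : std m ->
  exists S : 'I_k -> {set 'I_d},
    (forall l, stable e (S l)) /\
    (forall l l', l != l' -> [disjoint S l & S l']) /\
    'X_[m] = \prod_(l < k) xS e K (S l).
Proof.
case=> dm nstd; have [t mE] := mnm_sum_mnm1 dm.
pose S l := val (enum_val (t l)); have sS l : stable e (S l) := valP _.
have xSt l : xS e K (S l) = 'X_(t l).
  by rewrite xS_var_index // var_index_val enum_valK.
exists S; split=> //; split; last first.
  by rewrite mE -mprodXE; apply: eq_bigr => l _; rewrite xSt.
move=> l l' ll'; rewrite -setI_eq0; apply: contraT => meet; exfalso; apply: nstd.
have l'l : l' != l by rewrite eq_sym.
rewrite mE (bigD1 l) //= (bigD1 l') //= addmA addmC mpolyXD.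
apply/ideal_genMl/initial_idealX/mem_ideal_gen; right.
by exists (S l), (S l'); do !split=> //; rewrite mpolyXD !xSt.
Qed.

Lemma kempe_equiv_std_eq (f f' : {ffun 'I_d -> 'I_k}) :
    coloring e f -> kempe_equiv e f f' ->
  std (colmon e setT f) -> std (colmon e setT f') -> colmon e setT f = colmon e setT f'.
Proof.
move=> cf ff' [_ nf] [_ nf']; apply/eqP; apply: contraT => ne; exfalso.
have KGf := kempe_equiv_Kempe_ideal K e_sym ff' cf.
by case: (ideal_gen_binomial_initial lt_order ne KGf) => [/nf|/nf'].
Qed.

End StandardMonomials.

Theorem theorem1p2 (K : fieldType) (d k : nat) (e : rel 'I_d)
    (e_sym : forall u v, e u v = e v u) (e_irr : forall u, e u u = false) (hk : (0 < k)%N)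
    (lt : rel 'X_{1..nst e}) (hlt : monomial_order lt) :
  let std := std_monomial lt (Kempe_ideal e K) k in
  (* every standard monomial of degree k is x_{S_1}...x_{S_k}, S_l pairwise disjoint stable *)
  (forall m, std m ->
     exists S : 'I_k -> {set 'I_d},
       (forall l, stable e (S l)) /\
       (forall l l', l != l' -> [disjoint S l & S l']) /\
       'X_[m] = \prod_(l < k) xS e K (S l)) /\
  (* every k-Kempe class contains some f_i that is a k-coloring of G *)
  (forall g : {ffun 'I_d -> 'I_k}, proper_col e setT g ->
     exists (m : 'X_{1..nst e}) (f : {ffun 'I_d -> 'I_k}),
       std m /\ proper_col e setT f /\ 'X_[m] = xf e K setT f /\ kempe_equiv e g f) /\
  (* distinct f_i lie in distinct k-Kempe classes *)
  (forall (m m' : 'X_{1..nst e}) (f f' : {ffun 'I_d -> 'I_k}),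
     std m -> std m' -> proper_col e setT f -> proper_col e setT f' ->
     'X_[m] = xf e K setT f -> 'X_[m'] = xf e K setT f' ->
     kempe_equiv e f f' -> m = m').
Proof.
move=> std; split; [|split].
- exact: std_monomial_disjoint_stable.
- move=> g /proper_colT cg; have [f gf sf] := kempe_class_std K e_sym cg hlt.
  have pf := (proper_colT e f).2 (kempe_equiv_coloring e_sym gf cg).
  by exists (colmon e setT f), f; rewrite xf_colmon.
- move=> m m' f f' sm sm' pf pf' Ef Ef' ff'.
  rewrite xf_colmon // in Ef; rewrite xf_colmon // in Ef'.
  rewrite (mpolyX_inj Ef) (mpolyX_inj Ef') in sm sm' *.
  move/proper_colT: pf => cf.
  exact (kempe_equiv_std_eq e_sym hlt cf ff' sm sm').
Qed.
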